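(* Let $\alpha_1,\dots,\alpha_4$ be constants, $H=H(t,t^-,q,q^-,p,p^-)$ smooth, and $X=\eta(t,q,p)\partial_q+\nu(t,q,p)\partial_p$ (i.e. $\xi\equiv0$) such that $$\Omega=\nu^{-}(\alpha_{1}\dot{q}+\alpha_{2}\dot{q}^{-})+p^{-}(\alpha_{1}D(\eta)+\alpha_{2}D(\eta^{-}))+\nu(\alpha_{3}\dot{q}+\alpha_{4}\dot{q}^{-})+p(\alpha_{3}D(\eta)+\alpha_{4}D(\eta^{-}))-\eta H_q-\nu H_p-\eta^{-}H_{q^-}-\nu^{-}H_{p^-}=0.$$ Then on the solutions of the delay canonical Hamiltonian equations $$\alpha_{1}\dot{q}^{+}+(\alpha_{2}+\alpha_{3})\dot{q}+\alpha_{4}\dot{q}^{-}=\frac{\partial}{\partial p}(H+H^{+}),\qquad \alpha_{4}\dot{p}^{+}+(\alpha_{2}+\alpha_{3})\dot{p}+\alpha_{1}\dot{p}^{-}=-\frac{\partial}{\partial q}(H+H^{+}),$$ considered with the constant delay $t^+-t=t-t^-=\tau$, the relation $D(C)=(S_+-1)P$ holds, where $C=\eta(\alpha_{4}p^{+}+(\alpha_{2}+\alpha_{3})p+\alpha_{1}p^{-})$ and $P=(\alpha_{2}p^{-}+\alpha_{4}p)D(\eta^{-})+\nu^{-}(\alpha_{1}\dot{q}+\alpha_{2}\dot{q}^{-})-\eta^{-}H_{q^-}-\nu^{-}H_{p^-}$.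
   Context: Constant delay $\tau>0$; $t^\pm=t\pm\tau$, $f^\pm=f(t\pm\tau)$; scalar $q,p$. $S_\pm$ are the forward/backward shift operators on expressions (shifting all arguments by one step); $\eta^\pm=S_\pm(\eta)$, $\nu^\pm=S_\pm(\nu)$; $H^+=S_+(H)=H(t^+,t,q^+,q,p^+,p)$. $D$ is the total derivative acting on variables at $t^-,t,t^+$. $\Omega$ is the invariance expression $X(\tilde H)+\tilde HD(\xi)$ with $\tilde H=p^{-}(\alpha_{1}\dot{q}+\alpha_{2}\dot{q}^{-})+p(\alpha_{3}\dot{q}+\alpha_{4}\dot{q}^{-})-H$, specialized to $\xi\equiv0$. *)

From Stdlib Require Import Reals.
From Coquelicot Require Import Coquelicot.
Open Scope R_scope.

Definition F3 := R -> R -> R -> R.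

Definition d3_1 (f : F3) : F3 := fun t q p => Derive (fun s => f s q p) t.
Definition d3_2 (f : F3) : F3 := fun t q p => Derive (fun s => f t s p) q.
Definition d3_3 (f : F3) : F3 := fun t q p => Derive (fun s => f t q s) p.

Definition uncurry3 (f : F3) (v : R * R * R) : R :=
  match v with (a, b, c) => f a b c end.

Fixpoint Ck3 (n : nat) (f : F3) : Prop :=
  match n with
  | O => forall x : R * R * R, continuous (uncurry3 f) x
  | S m =>
      Ck3 m f /\
      (forall t q p, ex_derive (fun s => f s q p) t /\
                     ex_derive (fun s => f t s p) q /\
                     ex_derive (fun s => f t q s) p) /\
      Ck3 m (d3_1 f) /\ Ck3 m (d3_2 f) /\ Ck3 m (d3_3 f)
  end.

Definition smooth3 (f : F3) : Prop := forall n, Ck3 n f.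

(* ---------- functions of 6 variables H(t,t^-,q,q^-,p,p^-) ---------- *)
Definition F6 := R -> R -> R -> R -> R -> R -> R.

Definition d6_1 (f : F6) : F6 := fun a b c d e g => Derive (fun s => f s b c d e g) a.
Definition d6_2 (f : F6) : F6 := fun a b c d e g => Derive (fun s => f a s c d e g) b.
Definition d6_3 (f : F6) : F6 := fun a b c d e g => Derive (fun s => f a b s d e g) c.
Definition d6_4 (f : F6) : F6 := fun a b c d e g => Derive (fun s => f a b c s e g) d.
Definition d6_5 (f : F6) : F6 := fun a b c d e g => Derive (fun s => f a b c d s g) e.
Definition d6_6 (f : F6) : F6 := fun a b c d e g => Derive (fun s => f a b c d e s) g.

Definition uncurry6 (f : F6) (v : R * R * R * R * R * R) : R :=
  match v with (a, b, c, d, e, g) => f a b c d e g end.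

Fixpoint Ck6 (n : nat) (f : F6) : Prop :=
  match n with
  | O => forall x : R * R * R * R * R * R, continuous (uncurry6 f) x
  | S m =>
      Ck6 m f /\
      (forall a b c d e g,
          ex_derive (fun s => f s b c d e g) a /\
          ex_derive (fun s => f a s c d e g) b /\
          ex_derive (fun s => f a b s d e g) c /\
          ex_derive (fun s => f a b c s e g) d /\
          ex_derive (fun s => f a b c d s g) e /\
          ex_derive (fun s => f a b c d e s) g) /\
      Ck6 m (d6_1 f) /\ Ck6 m (d6_2 f) /\ Ck6 m (d6_3 f) /\
      Ck6 m (d6_4 f) /\ Ck6 m (d6_5 f) /\ Ck6 m (d6_6 f)
  end.

Definition smooth6 (f : F6) : Prop := forall n, Ck6 n f.

(* ---------- the invariance expression Omega (xi = 0), as a function on the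
   jet variables (t, q, q^-, p, p^-, qdot, qdot^-, pdot, pdot^-), with
   t^- = t - tau. *)
Definition Omega (a1 a2 a3 a4 tau : R) (H : F6) (eta nu : F3)
    (t q qm p pm dq dqm dp dpm : R) : R :=
  let tm := t - tau in
  let Deta := d3_1 eta t q p + dq * d3_2 eta t q p + dp * d3_3 eta t q p in
  let Detam := d3_1 eta tm qm pm + dqm * d3_2 eta tm qm pm
               + dpm * d3_3 eta tm qm pm in
  nu tm qm pm * (a1 * dq + a2 * dqm)
  + pm * (a1 * Deta + a2 * Detam)
  + nu t q p * (a3 * dq + a4 * dqm)
  + p * (a3 * Deta + a4 * Detam)
  - eta t q p * d6_3 H t tm q qm p pm
  - nu t q p * d6_5 H t tm q qm p pm
  - eta tm qm pm * d6_4 H t tm q qm p pm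
  - nu tm qm pm * d6_6 H t tm q qm p pm.

Definition Ctraj (a1 a2 a3 a4 tau : R) (eta : F3) (q p : R -> R) (t : R) : R :=
  eta t (q t) (p t) * (a4 * p (t + tau) + (a2 + a3) * p t + a1 * p (t - tau)).

Definition Ptraj (a1 a2 a3 a4 tau : R) (H : F6) (eta nu : F3) (q p : R -> R)
    (t : R) : R :=
  let tm := t - tau in
  (a2 * p tm + a4 * p t) * Derive (fun s => eta (s - tau) (q (s - tau)) (p (s - tau))) t
  + nu tm (q tm) (p tm) * (a1 * Derive q t + a2 * Derive q tm)
  - eta tm (q tm) (p tm) * d6_4 H t tm (q t) (q tm) (p t) (p tm)
  - nu tm (q tm) (p tm) * d6_6 H t tm (q t) (q tm) (p t) (p tm).

From Stdlib Require Import Reals Lra.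
From Coquelicot Require Import Coquelicot.
Open Scope R_scope.

(* Along a solution, the product rule gives
   D(C) = D(eta) (a4 p^+ + (a2+a3) p + a1 p^-) + eta (a4 pdot^+ + (a2+a3) pdot + a1 pdot^-).
   Replacing the second factor by the p-equation, using nu times the q-equation and the
   invariance condition Omega = 0 on the jet of the solution at t leaves exactly
   P(t+tau) - P(t): the identity is a linear combination of these three relations.
   The only analysis needed is the chain rule for eta along the trajectory, so of the
   regularity hypotheses only eta in C^1 is used. *)

Lemma is_derive_continuous (x : R -> R) (t dx : R) :
  is_derive x t dx -> continuous x t.
Proof.
  intros Hx. apply (ex_derive_continuous (K := R_AbsRing) (V := R_NormedModule)).
  exists dx. exact Hx.
Qed.

Lemma is_derive_comp_2 (f dfx : R -> R -> R) (dfy : R) (u v : R -> R) (t du dv : R) :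
  locally (u t, v t)
    (fun w : R * R => is_derive (fun z => f z (snd w)) (fst w) (dfx (fst w) (snd w))) ->
  is_derive (fun z => f (u t) z) (v t) dfy ->
  continuous (fun w : R * R => dfx (fst w) (snd w)) (u t, v t) ->
  is_derive u t du -> is_derive v t dv ->
  is_derive (fun s => f (u s) (v s)) t (dfx (u t) (v t) * du + dfy * dv).
Proof.
  intros Hx Hy Hc Hu Hv.
  pose proof (is_derive_filterdiff f (u t) (v t) dfx dfy Hx Hy Hc) as Hf.
  pose proof (filterdiff_comp'_2 u v f t _ _
     (fun a b => plus (scal a (dfx (u t) (v t))) (scal b dfy)) Hu Hv Hf) as Hcomp.
  eapply filterdiff_ext_lin; [exact Hcomp|].
  intros s; simpl. unfold scal, plus; simpl. unfold mult; simpl. ring.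
Qed.

Lemma continuous_comp_3 {U : UniformSpace} (g : F3) (a b c : U -> R) (w : U) :
  continuous (uncurry3 g) (a w, b w, c w) ->
  continuous a w -> continuous b w -> continuous c w ->
  continuous (fun v => g (a v) (b v) (c v)) w.
Proof.
  intros Hg Ha Hb Hc.
  apply (continuous_comp_2 (fun v => (a v, b v)) c (fun ab => g (fst ab) (snd ab)));
    [| exact Hc |].
  - apply (continuous_comp_2 a b pair); [exact Ha | exact Hb |].
    apply (continuous_ext (fun x => x)); [intros [? ?]; reflexivity | apply continuous_id].
  - apply (continuous_ext (uncurry3 g)); [intros [[? ?] ?]; reflexivity | exact Hg].
Qed.

Lemma is_derive_comp_3 (f : F3) (x y z : R -> R) (t dx dy dz : R) :
  Ck3 1 f -> is_derive x t dx -> is_derive y t dy -> is_derive z t dz ->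
  is_derive (fun s => f (x s) (y s) (z s)) t
    (d3_1 f (x t) (y t) (z t) * dx + d3_2 f (x t) (y t) (z t) * dy
     + d3_3 f (x t) (y t) (z t) * dz).
Proof.
  intros [_ [Hpartial [_ [C2 C3]]]] Hx Hy Hz.
  pose proof (is_derive_continuous x t dx Hx) as Cx.
  pose proof (is_derive_continuous y t dy Hy) as Cy.
  assert (Dx : is_derive (fun s => f (x s) (y t) (z t)) t (d3_1 f (x t) (y t) (z t) * dx)).
  { pose proof (is_derive_comp (fun a => f a (y t) (z t)) x t _ dx
      (Derive_correct _ _ (proj1 (Hpartial (x t) (y t) (z t)))) Hx) as D.
    rewrite Rmult_comm. exact D. }
  (* Each further variable is added by the two-variable chain rule, the variables already
     treated being absorbed into the time argument. *)
  assert (Dxy : is_derive (fun s => f (x s) (y s) (z t)) t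
                  (d3_1 f (x t) (y t) (z t) * dx + d3_2 f (x t) (y t) (z t) * dy)).
  { assert (Cxy :
      continuous (fun w : R * R => d3_2 f (x (snd w)) (fst w) (z t)) (y t, t)).
    { apply (continuous_comp_3 (d3_2 f) (fun w => x (snd w)) fst (fun _ => z t)).
      - apply C2.
      - apply (continuous_comp snd x); [apply continuous_snd | exact Cx].
      - apply continuous_fst.
      - apply continuous_const. }
    pose proof (is_derive_comp_2 (fun b s => f (x s) b (z t))
      (fun b s => d3_2 f (x s) b (z t)) _ y (fun s => s) t dy 1
      (filter_forall _ (fun w => Derive_correct _ _ (proj1 (proj2 (Hpartial _ _ _)))))
      Dx Cxy Hy (is_derive_id t)) as D.
    replace (d3_1 f (x t) (y t) (z t) * dx + d3_2 f (x t) (y t) (z t) * dy)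
      with (d3_2 f (x t) (y t) (z t) * dy + d3_1 f (x t) (y t) (z t) * dx * 1) by ring.
    exact D. }
  assert (Cxyz :
    continuous (fun w : R * R => d3_3 f (x (snd w)) (y (snd w)) (fst w)) (z t, t)).
  { apply (continuous_comp_3 (d3_3 f) (fun w => x (snd w)) (fun w => y (snd w)) fst).
    - apply C3.
    - apply (continuous_comp snd x); [apply continuous_snd | exact Cx].
    - apply (continuous_comp snd y); [apply continuous_snd | exact Cy].
    - apply continuous_fst. }
  pose proof (is_derive_comp_2 (fun c s => f (x s) (y s) c)
    (fun c s => d3_3 f (x s) (y s) c) _ z (fun s => s) t dz 1
    (filter_forall _ (fun w => Derive_correct _ _ (proj2 (proj2 (Hpartial _ _ _)))))
    Dxy Cxyz Hz (is_derive_id t)) as D.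
  replace (d3_1 f (x t) (y t) (z t) * dx + d3_2 f (x t) (y t) (z t) * dy
           + d3_3 f (x t) (y t) (z t) * dz)
    with (d3_3 f (x t) (y t) (z t) * dz
          + (d3_1 f (x t) (y t) (z t) * dx + d3_2 f (x t) (y t) (z t) * dy) * 1) by ring.
  exact D.
Qed.

Definition total_derive3 (f : F3) (q p : R -> R) (t : R) : R :=
  d3_1 f t (q t) (p t) + Derive q t * d3_2 f t (q t) (p t)
  + Derive p t * d3_3 f t (q t) (p t).

Lemma is_derive_along (f : F3) (q p : R -> R) (t : R) :
  Ck3 1 f -> ex_derive q t -> ex_derive p t ->
  is_derive (fun s => f s (q s) (p s)) t (total_derive3 f q p t).
Proof.
  intros Hf Hq Hp.
  pose proof (is_derive_comp_3 f (fun s => s) q p t 1 _ _ Hf (is_derive_id t)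
    (Derive_correct _ _ Hq) (Derive_correct _ _ Hp)) as D.
  rewrite Rmult_1_r in D. unfold total_derive3.
  rewrite (Rmult_comm (Derive q t)), (Rmult_comm (Derive p t)). exact D.
Qed.

Lemma is_derive_shift (g : R -> R) (c u dg : R) :
  is_derive g (u + c) dg -> is_derive (fun s => g (s + c)) u dg.
Proof.
  intros Hg.
  pose proof (is_derive_comp g (fun s => s + c) u dg 1 Hg) as D.
  rewrite <- (Rmult_1_l dg). apply D.
  auto_derive; [exact I | ring].
Qed.

Lemma Derive_delayed_along (f : F3) (q p : R -> R) (tau u : R) :
  Ck3 1 f -> ex_derive q (u - tau) -> ex_derive p (u - tau) ->
  Derive (fun s => f (s - tau) (q (s - tau)) (p (s - tau))) u
  = total_derive3 f q p (u - tau).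
Proof.
  intros Hf Hq Hp. apply is_derive_unique.
  apply (is_derive_shift (fun s => f s (q s) (p s)) (- tau)).
  apply is_derive_along; assumption.
Qed.

Lemma Derive_Ctraj (a1 a2 a3 a4 tau : R) (eta : F3) (q p : R -> R) (t : R) :
  Ck3 1 eta -> ex_derive q t -> (forall s, ex_derive p s) ->
  Derive (Ctraj a1 a2 a3 a4 tau eta q p) t
  = total_derive3 eta q p t * (a4 * p (t + tau) + (a2 + a3) * p t + a1 * p (t - tau))
    + eta t (q t) (p t)
      * (a4 * Derive p (t + tau) + (a2 + a3) * Derive p t + a1 * Derive p (t - tau)).
Proof.
  intros Heta Hq Hp. apply is_derive_unique.
  apply (is_derive_mult (fun s => eta s (q s) (p s))
           (fun s => a4 * p (s + tau) + (a2 + a3) * p s + a1 * p (s - tau))).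
  - apply is_derive_along; auto.
  - auto_derive; [auto | change (fun x : R => p x) with p; unfold Rminus; ring].
  - apply Rmult_comm.
Qed.

Theorem proposition4 (a1 a2 a3 a4 tau : R) (H : F6) (eta nu : F3) (q p : R -> R) :
  0 < tau ->
  smooth6 H -> smooth3 eta -> smooth3 nu ->
  (* invariance condition Omega = 0, identically in the jet variables *)
  (forall t q0 qm p0 pm dq dqm dp dpm,
      Omega a1 a2 a3 a4 tau H eta nu t q0 qm p0 pm dq dqm dp dpm = 0) ->
  (* (q, p) is a solution of the delay canonical Hamiltonian equations *)
  (forall t, ex_derive q t) -> (forall t, ex_derive p t) ->
  (forall t,
      a1 * Derive q (t + tau) + (a2 + a3) * Derive q t + a4 * Derive q (t - tau)
      = d6_5 H t (t - tau) (q t) (q (t - tau)) (p t) (p (t - tau))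
        + d6_6 H (t + tau) t (q (t + tau)) (q t) (p (t + tau)) (p t)) ->
  (forall t,
      a4 * Derive p (t + tau) + (a2 + a3) * Derive p t + a1 * Derive p (t - tau)
      = - (d6_3 H t (t - tau) (q t) (q (t - tau)) (p t) (p (t - tau))
           + d6_4 H (t + tau) t (q (t + tau)) (q t) (p (t + tau)) (p t))) ->
  (* conclusion: D(C) = (S_+ - 1) P *)
  forall t,
    Derive (Ctraj a1 a2 a3 a4 tau eta q p) t
    = Ptraj a1 a2 a3 a4 tau H eta nu q p (t + tau)
      - Ptraj a1 a2 a3 a4 tau H eta nu q p t.
Proof.
  intros _ _ Heta _ Homega Hq Hp Hq_eq Hp_eq t.
  assert (Heta1 : Ck3 1 eta) by apply Heta.
  rewrite Derive_Ctraj by auto.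
  unfold Ptraj. rewrite !Derive_delayed_along by auto.
  replace (t + tau - tau) with t by ring.
  pose proof (Homega t (q t) (q (t - tau)) (p t) (p (t - tau))
                (Derive q t) (Derive q (t - tau)) (Derive p t) (Derive p (t - tau))) as Om.
  pose proof (f_equal (Rmult (nu t (q t) (p t))) (Hq_eq t)) as Eq.
  pose proof (f_equal (Rmult (eta t (q t) (p t))) (Hp_eq t)) as Ep.
  unfold Omega in Om. unfold total_derive3. lra.
Qed.
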